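(* Let $H_1,\dots,H_K$ be Hermitian operators and $V_1,\dots,V_K$ unitaries on a finite-dimensional Hilbert space, let $\mathcal S:\{1,\dots,K\}\to\{1,2\}$ assign to each generator one of two real parameters $\theta_1,\theta_2$, let $U(\theta_1,\theta_2)=\prod_{k=1}^KV_ke^{-i\theta_{\mathcal S(k)}H_k}$ (ordered product, $k=1$ leftmost), and $\mathcal{E}_{\theta_1,\theta_2}(A)=U(\theta_1,\theta_2)^\dagger AU(\theta_1,\theta_2)$ for an operator $A$. Then for all integers $p_1,p_2\ge0$ and all $\phi_1,\phi_2\in\mathbb{R}$, $$\left\|\frac{\partial^{p_1+p_2}}{\partial\theta_1^{p_1}\partial\theta_2^{p_2}}\mathcal{E}_{\theta_1,\theta_2}(A)\Big|_{\theta_1=\phi_1,\theta_2=\phi_2}\right\|_\infty\le\Big(\sum_{l\in\mathcal S^{-1}(1)}2\omega^{(\max)}(H_l)\Big)^{p_1}\Big(\sum_{l\in\mathcal S^{-1}(2)}2\omega^{(\max)}(H_l)\Big)^{p_2}\|A\|_\infty.$$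
   Context: $\omega^{(\max)}(H)=\lambda_{\max}(H)-\lambda_{\min}(H)$ (largest minus smallest eigenvalue); $\|\cdot\|_\infty$ is the operator norm; $\mathcal S^{-1}(j)=\{l:\mathcal S(l)=j\}$. *)

From mathcomp Require Import all_boot all_algebra.
From mathcomp Require Import complex.
From mathcomp Require Import boolp classical_sets reals topology normedtype sequences derive.
Import GRing.Theory Num.Theory numFieldNormedType.Exports.

Set Implicit Arguments.
Unset Strict Implicit.
Unset Printing Implicit Defensive.

Local Open Scope ring_scope.
Local Open Scope complex_scope.
Local Open Scope ring_scope.
Local Open Scope sesquilinear_scope.

Section Defs.
Variable R : realType.
Local Notation C := R[i].

Definition reC (z : C) : R := @complex.Re R z.
Definition imC (z : C) : R := @complex.Im R z.

(* Hermitian matrices are [H \is hermsymmx] (sesquilinear.v: H == H ^t conjC),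
   unitary matrices are [V \is unitarymx] (spectral.v: V *m V ^t* == 1),
   and the adjoint is [M ^t*] (sesquilinear_scope). *)

Definition exp_psum n (M : 'M[C]_n) (N : nat) : 'M[C]_n :=
  \sum_(k < N) ((k`!)%:R)^-1 *: M ^+ k.

Definition expm n (M : 'M[C]_n) : 'M[C]_n :=
  \matrix_(a, b) (limn (fun N => reC (exp_psum M N a b))
                  +i* limn (fun N => imC (exp_psum M N a b))).

(* U(th1,th2) = prod_{k=1}^K V_k exp(-i th_{S(k)} H_k), k = 1 leftmost.
   The two parameters are indexed by 'I_2: ord0 <-> theta_1, ord_max <-> theta_2. *)
Definition Uop n K (H V : 'I_K -> 'M[C]_n) (S : 'I_K -> 'I_2) (th1 th2 : R)
  : 'M[C]_n :=
  \prod_(k < K)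
     (V k * expm ((- ('i * (if S k == ord0 then th1 else th2)%:C)) *: H k)).

Definition chan n K (H V : 'I_K -> 'M[C]_n) (S : 'I_K -> 'I_2) (A : 'M[C]_n)
  (th1 th2 : R) : 'M[C]_n :=
  (Uop H V S th1 th2) ^t* *m A *m Uop H V S th1 th2.

Definition dmx n (F : R -> 'M[C]_n) (t : R) : 'M[C]_n :=
  \matrix_(a, b) (derive1 (fun s => reC (F s a b)) t
                  +i* derive1 (fun s => imC (F s a b)) t).

Definition pd1 n (G : R -> R -> 'M[C]_n) : R -> R -> 'M[C]_n :=
  fun t1 t2 => dmx (fun s => G s t2) t1.
Definition pd2 n (G : R -> R -> 'M[C]_n) : R -> R -> 'M[C]_n :=
  fun t1 t2 => dmx (G t1) t2.

Definition pderiv n (p1 p2 : nat) (G : R -> R -> 'M[C]_n) : R -> R -> 'M[C]_n :=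
  iter p1 (@pd1 n) (iter p2 (@pd2 n) G).

Definition vnorm n (x : 'cV[C]_n) : R :=
  Num.sqrt (\sum_(a < n) (reC (x a 0) ^+ 2 + imC (x a 0) ^+ 2)).

Definition opnorm n (M : 'M[C]_n) : R :=
  sup [set r : R | exists x : 'cV[C]_n, vnorm x = 1 /\ r = vnorm (M *m x)].

(* omega_max(H) = lambda_max(H) - lambda_min(H) (eigenvalues of a Hermitian
   matrix are real) *)
Definition spec_real n (M : 'M[C]_n) : set R :=
  [set r : R | eigenvalue M (r%:C)].

Definition omega_max n (M : 'M[C]_n) : R :=
  sup (spec_real M) - inf (spec_real M).

End Defs.

(* Write U = U_1 ... U_K with U_k = V_k e^(-i th_(S k) H_k).  The channel is the composite
   of the conjugations X |-> U_k^* X U_k, and differentiating the k-th conjugation in its own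
   parameter applies X |-> i [H_k, X] to it.  So every mixed partial derivative is a sum, over
   a multiset of multi-indices m, of the composites of X |-> (i [H_k, .])^(m_k) (U_k^* X U_k),
   and differentiating in th_s replaces each m by all the m + e_j with S j = s.  Conjugation by
   a unitary does not increase the operator norm, and |[H, X]| <= 2 omega(H) |X| because
   H may be shifted by an eigenvalue, after which its spectrum lies in [-omega(H), omega(H)].
   Hence the term of m is bounded by prod_k (2 omega(H_k))^(m_k) |A|, and these weights add up
   to the product of powers in the statement. *)

From mathcomp Require Import all_boot all_algebra.
From mathcomp Require Import complex.
From mathcomp Require Import boolp classical_sets reals topology normedtype sequences derive.
Import GRing.Theory Num.Theory numFieldNormedType.Exports.
Local Open Scope ring_scope.

From mathcomp Require Import all_order trigo realfun ring lra.
Import Order.TTheory.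

Set Implicit Arguments.
Unset Strict Implicit.
Unset Printing Implicit Defensive.

Local Open Scope complex_scope.
Local Open Scope ring_scope.
Local Open Scope sesquilinear_scope.
Local Open Scope classical_set_scope.

Local Notation negi t := (- ('i * t%:C)).

Section ComplexParts.
Variable R : realType.
Local Notation C := R[i].
Implicit Types (x y z : C) (r : R).

Lemma reCD x y : reC (x + y) = reC x + reC y. Proof. by case: x; case: y. Qed.
Lemma imCD x y : imC (x + y) = imC x + imC y. Proof. by case: x; case: y. Qed.
Lemma reCM x y : reC (x * y) = reC x * reC y - imC x * imC y.
Proof. by case: x; case: y. Qed.
Lemma imCM x y : imC (x * y) = reC x * imC y + imC x * reC y.
Proof. by case: x; case: y. Qed.
Lemma reCJ x : reC x^* = reC x. Proof. by case: x. Qed.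
Lemma imCJ x : imC x^* = - imC x. Proof. by case: x. Qed.

Lemma reC_sum (I : Type) (s : seq I) (P : pred I) (F : I -> C) :
  reC (\sum_(i <- s | P i) F i) = \sum_(i <- s | P i) reC (F i).
Proof. by elim/big_rec2: _ => // i u v _ <-; rewrite reCD. Qed.

Lemma imC_sum (I : Type) (s : seq I) (P : pred I) (F : I -> C) :
  imC (\sum_(i <- s | P i) F i) = \sum_(i <- s | P i) imC (F i).
Proof. by elim/big_rec2: _ => // i u v _ <-; rewrite imCD. Qed.

Lemma complex_ext x y : reC x = reC y -> imC x = imC y -> x = y.
Proof. by case: x; case: y => ? ? ? ? /= -> ->. Qed.

Definition sqmod z : R := reC z ^+ 2 + imC z ^+ 2.

Lemma sqmod_ge0 z : 0 <= sqmod z.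
Proof. by rewrite addr_ge0 ?sqr_ge0. Qed.

Lemma sqmodM x y : sqmod (x * y) = sqmod x * sqmod y.
Proof. by rewrite /sqmod reCM imCM; ring. Qed.

Lemma sqmod_real r : sqmod r%:C = r ^+ 2.
Proof. by rewrite /sqmod /= expr0n addr0. Qed.

Lemma sqmod_eq0 z : sqmod z = 0 -> z = 0.
Proof.
move/eqP; rewrite paddr_eq0 ?sqr_ge0 // !sqrf_eq0 => /andP[/eqP re0 /eqP im0].
exact: complex_ext.
Qed.

Lemma mulJC_sqmod z : z^* * z = (sqmod z)%:C.
Proof. by apply: complex_ext; rewrite ?reCM ?imCM reCJ imCJ /sqmod /=; ring. Qed.

End ComplexParts.

Lemma unitarymx_tCmul (R : realType) n (U : 'M[R[i]]_n) : U \is unitarymx -> U ^t* *m U = 1%:M.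
Proof. by move=> /unitarymxP /mulmx1C. Qed.

Section EuclideanNorm.
Variables (R : realType) (n : nat).
Local Notation C := R[i].
Implicit Types x y : 'cV[C]_n.

Definition vnorm2 x : R := \sum_(a < n) sqmod (x a 0).

Definition vdot x y : R :=
  \sum_(a < n) (reC (x a 0) * reC (y a 0) + imC (x a 0) * imC (y a 0)).

Lemma vnormE x : vnorm x = Num.sqrt (vnorm2 x). Proof. by []. Qed.

Lemma vnorm2_ge0 x : 0 <= vnorm2 x.
Proof. by apply: sumr_ge0 => a _; exact: sqmod_ge0. Qed.

Lemma vnorm_ge0 x : 0 <= vnorm x.
Proof. exact: sqrtr_ge0. Qed.

Lemma sqr_vnorm x : vnorm x ^+ 2 = vnorm2 x.
Proof. by rewrite sqr_sqrtr // vnorm2_ge0. Qed.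

Lemma vnorm0 : vnorm (0 : 'cV[C]_n) = 0.
Proof. by rewrite /vnorm big1 ?sqrtr0 // => a _; rewrite mxE /= expr0n addr0. Qed.

Lemma vnormZ c x : vnorm (c *: x) = Num.sqrt (sqmod c) * vnorm x.
Proof.
rewrite !vnormE -sqrtrM ?sqmod_ge0 // mulr_sumr; congr Num.sqrt.
by apply: eq_bigr => a _; rewrite mxE sqmodM.
Qed.

Lemma vnorm2_eq0 x : vnorm2 x = 0 -> x = 0.
Proof.
move/eqP; rewrite psumr_eq0 => [/allP x0|a _]; last exact: sqmod_ge0.
apply/matrixP => a b; rewrite ord1 mxE; apply: sqmod_eq0.
by apply/eqP/x0; rewrite mem_index_enum.
Qed.

Lemma vnorm2_lincomb (c d : R) x y :
  vnorm2 (c%:C *: x + d%:C *: y) = c ^+ 2 * vnorm2 x + 2 * c * d * vdot x y + d ^+ 2 * vnorm2 y.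
Proof.
rewrite /vnorm2 /vdot !mulr_sumr -!big_split /=; apply: eq_bigr => a _.
by rewrite !mxE /sqmod reCD imCD !(reCM, imCM) /=; ring.
Qed.

Lemma vdot_CauchySchwarz x y : vdot x y ^+ 2 <= vnorm2 x * vnorm2 y.
Proof.
have [x0|xN0] := eqVneq (vnorm2 x) 0.
  rewrite x0 (vnorm2_eq0 x0) mul0r /vdot big1 ?expr0n // => a _.
  by rewrite mxE /= !mul0r addr0.
have x_gt0 : 0 < vnorm2 x by rewrite lt0r xN0 vnorm2_ge0.
(* 0 <= |<x, x> y - <x, y> x|^2 *)
have := vnorm2_ge0 ((- vdot x y)%:C *: x + (vnorm2 x)%:C *: y).
rewrite vnorm2_lincomb => ge0.
have : 0 <= vnorm2 x * (vnorm2 x * vnorm2 y - vdot x y ^+ 2) by nra.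
by rewrite pmulr_rge0 // subr_ge0.
Qed.

Lemma ler_vnormD x y : vnorm (x + y) <= vnorm x + vnorm y.
Proof.
rewrite -ler_sqr ?nnegrE ?addr_ge0 ?vnorm_ge0 // sqrrD !sqr_vnorm.
have -> : x + y = 1%:C *: x + 1%:C *: y by rewrite !scale1r.
rewrite vnorm2_lincomb.
have : `|vdot x y| <= vnorm x * vnorm y.
  rewrite -ler_sqr ?nnegrE ?mulr_ge0 ?vnorm_ge0 // real_normK ?num_real //.
  by rewrite exprMn !sqr_vnorm vdot_CauchySchwarz.
have := ler_norm (vdot x y); lra.
Qed.

Lemma ler_vnorm_sum (I : Type) (s : seq I) (F : I -> 'cV[C]_n) :
  vnorm (\sum_(i <- s) F i) <= \sum_(i <- s) vnorm (F i).
Proof.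
elim: s => [|i s IH]; first by rewrite !big_nil vnorm0.
by rewrite !big_cons; apply: le_trans (ler_vnormD _ _) _; rewrite lerD2l.
Qed.

Lemma vnorm_unitary (U : 'M[C]_n) x : U \is unitarymx -> vnorm (U *m x) = vnorm x.
Proof.
have vnorm2E y : vnorm2 y = reC ((y ^t* *m y) 0 0).
  by rewrite !mxE reC_sum; apply: eq_bigr => a _; rewrite !mxE mulJC_sqmod.
move=> /unitarymx_tCmul UU; rewrite !vnormE !vnorm2E.
by rewrite trmx_mul map_mxM !mulmxA -(mulmxA _ _ U) UU mulmx1.
Qed.

Lemma sqmod_le_vnorm2 x a : sqmod (x a 0) <= vnorm2 x.
Proof. by rewrite /vnorm2 (bigD1 a) //= lerDl sumr_ge0 // => b _; exact: sqmod_ge0. Qed.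

End EuclideanNorm.

Section OperatorNorm.
Variables (R : realType) (n : nat).
Local Notation C := R[i].
Implicit Types M N : 'M[C]_n.

Definition opnorm_set M := [set r : R | exists x : 'cV[C]_n, vnorm x = 1 /\ r = vnorm (M *m x)].

Lemma opnorm_set_ub M : has_ubound (opnorm_set M).
Proof.
exists (\sum_b vnorm (col b M)) => _ [x [x1 ->]].
have -> : M *m x = \sum_b x b 0 *: col b M.
  by apply/colP => a; rewrite !mxE summxE; apply: eq_bigr => b _; rewrite !mxE mulrC.
apply: le_trans (ler_vnorm_sum _ _) _; apply: ler_sum => b _.
rewrite vnormZ -[leRHS]mul1r ler_wpM2r ?vnorm_ge0 // -x1 vnormE ler_sqrt ?vnorm2_ge0 //.
exact: sqmod_le_vnorm2.
Qed.

(* The set is empty exactly when [n = 0], and then [opnorm M = sup set0 = 0]. *)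
Lemma opnorm_empty M : ~ (opnorm_set M !=set0) -> opnorm M = 0.
Proof.
move=> M0; rewrite -[RHS](@sup0 R); congr sup.
by apply/seteqP; split => // r Mr; apply: M0; exists r.
Qed.

Lemma opnorm_ge0 M : 0 <= opnorm M.
Proof.
have [[r Mr]|M0] := pselect (opnorm_set M !=set0); last by rewrite opnorm_empty.
apply: le_trans (ub_le_sup (opnorm_set_ub M) Mr).
by case: Mr => x [_ ->]; exact: vnorm_ge0.
Qed.

Lemma vnorm_mulmx_le M x : vnorm (M *m x) <= opnorm M * vnorm x.
Proof.
have [v0|vN0] := eqVneq (vnorm x) 0.
  have -> : x = 0 by apply: vnorm2_eq0; rewrite -sqr_vnorm v0 expr0n.
  by rewrite mulmx0 vnorm0 mulr0.
have v_gt0 : 0 < vnorm x by rewrite lt0r vN0 vnorm_ge0.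
set y := (vnorm x)^-1%:C *: x.
have y1 : vnorm y = 1 by rewrite vnormZ sqmod_real sqrtr_sqr gtr0_norm ?invr_gt0 ?mulVf.
have := ub_le_sup (opnorm_set_ub M) (ex_intro _ y (conj y1 erefl)).
by rewrite -scalemxAr vnormZ sqmod_real sqrtr_sqr gtr0_norm ?invr_gt0 // mulrC ler_pdivrMr.
Qed.

Lemma opnorm_le M b : 0 <= b -> (forall x, vnorm (M *m x) <= b * vnorm x) -> opnorm M <= b.
Proof.
move=> b_ge0 Mb; have [Mn0|M0] := pselect (opnorm_set M !=set0); last by rewrite opnorm_empty.
by apply: ge_sup => // _ [x [x1 ->]]; rewrite -[b]mulr1 -x1.
Qed.

Lemma opnorm0 : opnorm (0 : 'M[C]_n) = 0.
Proof.
apply/eqP; rewrite eq_le opnorm_ge0 andbT.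
by apply: opnorm_le => // x; rewrite mul0mx vnorm0 mul0r.
Qed.

Lemma ler_opnormM M N : opnorm (M *m N) <= opnorm M * opnorm N.
Proof.
apply: opnorm_le => [|x]; first by rewrite mulr_ge0 ?opnorm_ge0.
rewrite -mulmxA -mulrA; apply: le_trans (vnorm_mulmx_le M _) _.
by rewrite ler_wpM2l ?opnorm_ge0 ?vnorm_mulmx_le.
Qed.

Lemma ler_opnormD M N : opnorm (M + N) <= opnorm M + opnorm N.
Proof.
apply: opnorm_le => [|x]; first by rewrite addr_ge0 ?opnorm_ge0.
rewrite mulmxDl mulrDl; apply: le_trans (ler_vnormD _ _) _.
by rewrite lerD ?vnorm_mulmx_le.
Qed.

Lemma ler_opnormZ c M : opnorm (c *: M) <= Num.sqrt (sqmod c) * opnorm M.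
Proof.
apply: opnorm_le => [|x]; first by rewrite mulr_ge0 ?opnorm_ge0 ?sqrtr_ge0.
rewrite -scalemxAl vnormZ -mulrA.
by rewrite ler_wpM2l ?sqrtr_ge0 ?vnorm_mulmx_le.
Qed.

Lemma ler_opnormB M N : opnorm (M - N) <= opnorm M + opnorm N.
Proof.
apply: le_trans (ler_opnormD _ _) _; rewrite lerD2l -scaleN1r.
apply: le_trans (ler_opnormZ _ _) _.
by rewrite /sqmod /= oppr0 sqrrN expr1n expr0n addr0 sqrtr1 mul1r.
Qed.

Lemma ler_opnorm_sum (I : Type) (s : seq I) (F : I -> 'M[C]_n) :
  opnorm (\sum_(i <- s) F i) <= \sum_(i <- s) opnorm (F i).
Proof.
elim: s => [|i s IH]; first by rewrite !big_nil opnorm0.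
by rewrite !big_cons; apply: le_trans (ler_opnormD _ _) _; rewrite lerD2l.
Qed.

Lemma opnorm_unitary_conj_le (U : 'M[C]_n) M :
  U \is unitarymx -> opnorm (U ^t* *m M *m U) <= opnorm M.
Proof.
move=> U_unitary; apply: opnorm_le => [|x]; first exact: opnorm_ge0.
rewrite -!mulmxA vnorm_unitary ?trmxC_unitary //.
by rewrite -(vnorm_unitary x U_unitary) vnorm_mulmx_le.
Qed.

Lemma opnorm_diag_le (d : 'rV[C]_n) b :
  0 <= b -> (forall j, sqmod (d 0 j) <= b ^+ 2) -> opnorm (diag_mx d) <= b.
Proof.
move=> b_ge0 db; apply: opnorm_le => // x.
rewrite !vnormE -(ger0_norm b_ge0) -sqrtr_sqr -sqrtrM ?sqr_ge0 //.
rewrite ler_sqrt ?mulr_ge0 ?sqr_ge0 ?vnorm2_ge0 // mulr_sumr; apply: ler_sum => j _.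
by rewrite mul_diag_mx mxE sqmodM ler_wpM2r ?sqmod_ge0.
Qed.

End OperatorNorm.

Section HermitianSpectrum.
Variables (R : realType) (n : nat) (H : 'M[R[i]]_n).
Hypothesis H_herm : H \is hermsymmx.
Local Notation C := R[i].
Local Notation P := (spectralmx H).
Local Notation d := (spectral_diag H).

Definition eigval (j : 'I_n) : R := reC (d 0 j).

Lemma hermitian_spectral_decomp : H = P ^t* *m diag_mx d *m P.
Proof.
have /orthomx_spectralP := hermitian_normalmx H_herm.
by rewrite invmx_unitary // spectral_unitarymx.
Qed.

Lemma spectral_diag_real j : d 0 j = (eigval j)%:C.
Proof.
have /mxOverP /(_ 0 j) /CrealP := hermitian_spectral_diag_real H_herm.
move/(congr1 (@imC R)); rewrite imCJ => imN.
by apply: complex_ext => //=; lra.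
Qed.

Lemma mulmx_spectral_herm : P *m H = diag_mx d *m P.
Proof.
rewrite {2}hermitian_spectral_decomp !mulmxA (unitarymxP (spectral_unitarymx H)).
by rewrite mul1mx.
Qed.

Lemma eigenvalue_eigval j : eigenvalue H (eigval j)%:C.
Proof.
apply/eigenvalueP; exists (delta_mx 0 j *m P).
  rewrite -mulmxA mulmx_spectral_herm mulmxA -[_ *m diag_mx _]rowE row_diag_mx.
  by rewrite spectral_diag_real scalemxAl.
apply: contraTneq isT => P0.
have := congr1 (mulmx^~ (P ^t*)) P0; rewrite mul0mx -mulmxA.
rewrite (unitarymxP (spectral_unitarymx H)) mulmx1 => /matrixP /(_ 0 j).
by rewrite !mxE !eqxx => /eqP; rewrite oner_eq0.
Qed.

Lemma eigenvalue_spectral_diag z : eigenvalue H z -> exists j, z = d 0 j.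
Proof.
move=> /eigenvalueP [v vH vN0].
pose w := v *m P ^t*.
have v_wP : v = w *m P by rewrite -mulmxA unitarymx_tCmul ?spectral_unitarymx ?mulmx1.
have wD : w *m diag_mx d = z *: w.
  rewrite -[LHS]mulmx1 -(unitarymxP (spectral_unitarymx H)) mulmxA -(mulmxA w).
  by rewrite -mulmx_spectral_herm mulmxA -v_wP vH -scalemxAl.
have [j wj] : exists j, w 0 j != 0.
  apply/existsP; apply: contraNT vN0; rewrite negb_exists => /forallP w0.
  rewrite v_wP (_ : w = 0) ?mul0mx //.
  by apply/rowP => k; rewrite [RHS]mxE; apply/eqP; have := w0 k; rewrite negbK.
exists j; apply: (mulIf wj); move/rowP: wD => /(_ j).
by rewrite mul_mx_diag !mxE mulrC.
Qed.

Lemma spec_real_eigval r : spec_real H r -> exists j, r = eigval j.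
Proof.
by move=> /eigenvalue_spectral_diag [j rj]; exists j; rewrite /eigval -rj.
Qed.

Lemma spec_real_bounded r : spec_real H r -> `|r| <= \sum_j `|eigval j|.
Proof.
move=> /spec_real_eigval [j ->]; rewrite (bigD1 j) //= lerDl.
by apply: sumr_ge0 => k _; exact: normr_ge0.
Qed.

Lemma spec_real_sub_le_omega r s :
  spec_real H r -> spec_real H s -> r - s <= omega_max H.
Proof.
move=> Hr Hs; apply: lerB.
  apply: ub_le_sup Hr; exists (\sum_j `|eigval j|) => t /spec_real_bounded.
  exact: le_trans (ler_norm t).
apply: ge_inf Hs; exists (- \sum_j `|eigval j|) => t /spec_real_bounded.
by rewrite ler_norml => /andP[].
Qed.

Lemma omega_max_ge0 : 0 <= omega_max H.
Proof.
have [[r Hr]|H0] := pselect (spec_real H !=set0).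
  by have := spec_real_sub_le_omega Hr Hr; rewrite subrr.
rewrite /omega_max (_ : spec_real H = set0) ?sup0 ?inf0 ?subrr //.
by apply/seteqP; split => // r Hr; apply: H0; exists r.
Qed.

Lemma opnorm_sub_eigval_le j : opnorm (H - (eigval j)%:C%:M) <= omega_max H.
Proof.
set c := (eigval j)%:C.
have -> : H - c%:M = P ^t* *m diag_mx (d - const_mx c) *m P.
  rewrite raddfB /= diag_const_mx mulmxBr mulmxBl -hermitian_spectral_decomp.
  by rewrite mul_mx_scalar -scalemxAl unitarymx_tCmul ?spectral_unitarymx ?scalemx1.
apply: le_trans (opnorm_unitary_conj_le _ (spectral_unitarymx H)) _.
apply: opnorm_diag_le => [|l]; first exact: omega_max_ge0.
rewrite !mxE spectral_diag_real -rmorphB sqmod_real.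
rewrite -ler_sqrt ?sqr_ge0 // !sqrtr_sqr (ger0_norm omega_max_ge0) ler_norml.
rewrite lerNl opprB; apply/andP; split;
  exact: spec_real_sub_le_omega (eigenvalue_eigval _) (eigenvalue_eigval _).
Qed.

Lemma opnorm_commutator_le X : opnorm (H *m X - X *m H) <= 2 * omega_max H * opnorm X.
Proof.
have [n0|n_gt0] := posnP n.
  have -> : H *m X - X *m H = 0 by apply/matrixP => -[a a_lt]; exfalso; move: a_lt; rewrite n0.
  by rewrite opnorm0 !mulr_ge0 ?omega_max_ge0 ?opnorm_ge0.
set Hc := H - (eigval (Ordinal n_gt0))%:C%:M.
have -> : H *m X - X *m H = Hc *m X - X *m Hc.
  by rewrite mulmxBl mulmxBr mul_scalar_mx mul_mx_scalar opprB addrA subrK.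
have Hc_le := opnorm_sub_eigval_le (Ordinal n_gt0).
have HcX := le_trans (ler_opnormM Hc X) (ler_wpM2r (opnorm_ge0 X) Hc_le).
have XHc := le_trans (ler_opnormM X Hc) (ler_wpM2l (opnorm_ge0 X) Hc_le).
rewrite [_ * omega_max H]mulrC in XHc.
apply: le_trans (ler_opnormB _ _) _.
rewrite -mulrA mulr_natl mulr2n; exact: lerD HcX XHc.
Qed.

End HermitianSpectrum.

Section ScalarExponential.
Variable R : realType.
Local Notation C := R[i].
Implicit Types (t : R) (z : C).

Definition expNi t : C := cos t +i* (- sin t).

Definition cvgC (u : nat -> C) z :=
  (reC (u N) @[N --> \oo] --> reC z) /\ (imC (u N) @[N --> \oo] --> imC z).

Lemma cvgC_sum (I : Type) (s : seq I) (u : I -> nat -> C) (w : I -> C) :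
  (forall i, cvgC (u i) (w i)) -> cvgC (fun N => \sum_(i <- s) u i N) (\sum_(i <- s) w i).
Proof.
move=> uw; split; under eq_fun do rewrite ?reC_sum ?imC_sum; rewrite ?reC_sum ?imC_sum.
  by apply: cvg_big => // [|i _]; [exact: add_continuous | case: (uw i)].
by apply: cvg_big => // [|i _]; [exact: add_continuous | case: (uw i)].
Qed.

Lemma cvgC_mull (c : C) (u : nat -> C) z : cvgC u z -> cvgC (fun N => c * u N) (c * z).
Proof.
move=> [re_cvg im_cvg]; split; under eq_fun do rewrite ?reCM ?imCM; rewrite ?reCM ?imCM.
  by apply: cvgB; apply: cvgMl_tmp.
by apply: cvgD; apply: cvgMl_tmp.
Qed.

Lemma cvgC_lim (u : nat -> C) z :
  cvgC u z -> limn (fun N => reC (u N)) +i* limn (fun N => imC (u N)) = z.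
Proof. by case=> /cvg_lim -> // /cvg_lim -> //; case: z. Qed.

Lemma negi_expr_double t m : negi t ^+ m.*2 = ((-1) ^+ m * t ^+ m.*2)%:C.
Proof.
have negi_sqr : negi t ^+ 2 = (- t ^+ 2)%:C.
  by apply: complex_ext; rewrite /= ?expr2 /= ?reCM ?imCM /=; ring.
by rewrite -mul2n !exprM negi_sqr -exprNn rmorphXn.
Qed.

Lemma exp_series_negi_coeff t k :
  (k`!%:R)^-1 * negi t ^+ k = cos_coeff t k +i* (- sin_coeff t k).
Proof.
have -> : (k`!%:R : C)^-1 = ((k`!%:R)^-1)%:C by rewrite fmorphV rmorph_nat.
rewrite /cos_coeff /sin_coeff /= -(odd_double_half k) -!exprnP.
(* [ring] cannot reify powers with symbolic exponents, nor inverses of factorials *)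
case: (odd k); move: (k./2) => m;
  rewrite ?add0n ?add1n /= odd_double ?half_double ?uphalf_double ?exprS negi_expr_double;
  by apply: complex_ext; rewrite /=; move: ((-1) ^+ m) (t ^+ m.*2) (_`!%:R^-1) => a b f; ring.
Qed.

Lemma cvgC_exp_series_negi t :
  cvgC (fun N => \sum_(k < N) (k`!%:R)^-1 * negi t ^+ k) (expNi t).
Proof.
have partial_sums N : \sum_(k < N) (k`!%:R)^-1 * negi t ^+ k =
    series (cos_coeff t) N +i* - series (sin_coeff t) N.
  rewrite /series /= !big_mkord -sumrN.
  by apply: complex_ext; rewrite ?reC_sum ?imC_sum /=; apply: eq_bigr => k _;
    rewrite exp_series_negi_coeff.
split; under eq_fun do rewrite partial_sums /=; rewrite /expNi /=.
  by rewrite cos.unlock; exact: is_cvg_series_cos_coeff.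
by apply: cvgN; rewrite sin.unlock; exact: is_cvg_series_sin_coeff.
Qed.

End ScalarExponential.

Section UnitaryDiagonalization.
Variables (R : realType) (n : nat).
Local Notation C := R[i].
Variable P : 'M[C]_n.
Hypothesis P_unitary : P \is unitarymx.

Lemma conj_diag_entry (e : 'rV[C]_n) a b :
  (P ^t* *m diag_mx e *m P) a b = \sum_j P ^t* a j * P j b * e 0 j.
Proof. by rewrite mxE; apply: eq_bigr => j _; rewrite mul_mx_diag mxE mulrAC. Qed.

Lemma mul_conj_diag (e f : 'rV[C]_n) :
  (P ^t* *m diag_mx e *m P) *m (P ^t* *m diag_mx f *m P) =
  P ^t* *m diag_mx (\row_j (e 0 j * f 0 j)) *m P.
Proof.
rewrite !mulmxA -(mulmxA _ P) (unitarymxP P_unitary) mulmx1.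
by rewrite -[P ^t* *m _ *m diag_mx f]mulmxA mulmx_diag.
Qed.

Lemma expr_conj_diag (e : 'rV[C]_n) k :
  (P ^t* *m diag_mx e *m P) ^+ k = P ^t* *m diag_mx (\row_j e 0 j ^+ k) *m P.
Proof.
elim: k => [|k IH].
  rewrite expr0 (_ : \row_j _ = const_mx 1); last by apply/rowP => j; rewrite !mxE.
  by rewrite diag_const_mx mulmx1 unitarymx_tCmul.
rewrite exprSr IH -mulmxE mul_conj_diag.
by congr (_ *m diag_mx _ *m _); apply/rowP => j; rewrite !mxE exprSr.
Qed.

Lemma expm_conj_diag (e : 'rV[C]_n) (f : 'I_n -> C) :
  (forall j, cvgC (fun N => \sum_(k < N) (k`!%:R)^-1 * e 0 j ^+ k) (f j)) ->
  expm (P ^t* *m diag_mx e *m P) = P ^t* *m diag_mx (\row_j f j) *m P.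
Proof.
move=> ef; apply/matrixP => a b; rewrite [LHS]mxE conj_diag_entry; apply: cvgC_lim.
under eq_fun do rewrite /exp_psum summxE; under eq_fun do under eq_bigr do
  rewrite mxE expr_conj_diag conj_diag_entry mulr_sumr.
under eq_fun do rewrite exchange_big /=.
apply: cvgC_sum => j; rewrite mxE.
under eq_fun do under eq_bigr do rewrite mxE mulrCA.
under eq_fun do rewrite -mulr_sumr.
by apply: cvgC_mull; exact: ef.
Qed.

End UnitaryDiagonalization.

Lemma diag_expNi_unitary (R : realType) n (r : 'I_n -> R) :
  diag_mx (\row_j expNi (r j)) \is unitarymx.
Proof.
apply/unitarymxP; rewrite tr_diag_mx map_diag_mx mulmx_diag -diag_const_mx.
congr diag_mx; apply/rowP => j; rewrite !mxE mulrC mulJC_sqmod /sqmod /=.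
by rewrite sqrrN cos2Dsin2.
Qed.

Section HermitianExponential.
Variables (R : realType) (n : nat) (H : 'M[R[i]]_n).
Hypothesis H_herm : H \is hermsymmx.
Local Notation P := (spectralmx H).

Lemma scale_herm_spectral c :
  c *: H = P ^t* *m diag_mx (\row_j (c * (eigval H j)%:C)) *m P.
Proof.
rewrite {1}(hermitian_spectral_decomp H_herm) scalemxAl scalemxAr -linearZ /=.
by congr (_ *m diag_mx _ *m _); apply/rowP => j; rewrite !mxE spectral_diag_real.
Qed.

Lemma expm_herm t :
  expm (negi t *: H) = P ^t* *m diag_mx (\row_j expNi (t * eigval H j)) *m P.
Proof.
rewrite scale_herm_spectral; apply: expm_conj_diag; first exact: spectral_unitarymx.
move=> j; rewrite mxE (_ : negi t * _ = negi (t * eigval H j)).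
  exact: cvgC_exp_series_negi.
by rewrite rmorphM /= mulNr mulrA.
Qed.

Lemma expm_herm_unitary t : expm (negi t *: H) \is unitarymx.
Proof.
by rewrite expm_herm !mul_unitarymx ?trmxC_unitary ?spectral_unitarymx ?diag_expNi_unitary.
Qed.

End HermitianExponential.

Section ComplexDerivative.
Variable R : realType.
Local Notation C := R[i].
Implicit Types (f g : R -> C) (t : R) (z w : C).

Definition is_deriveC f t z :=
  is_derive t 1 (fun s => reC (f s)) (reC z) /\ is_derive t 1 (fun s => imC (f s)) (imC z).

Lemma is_deriveC_cst w t : is_deriveC (fun=> w) t 0.
Proof. by split; exact: is_derive_cst. Qed.

Lemma is_deriveCD f g t z w :
  is_deriveC f t z -> is_deriveC g t w -> is_deriveC (fun s => f s + g s) t (z + w).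
Proof.
move=> [fre fim] [gre gim]; split.
  by under [fun s => _]funext do rewrite reCD; rewrite reCD; exact: is_deriveD.
by under [fun s => _]funext do rewrite imCD; rewrite imCD; exact: is_deriveD.
Qed.

Lemma is_deriveC_eq f t z w : is_deriveC f t z -> z = w -> is_deriveC f t w.
Proof. by move=> ? <-. Qed.

Lemma is_deriveCM f g t z w : is_deriveC f t z -> is_deriveC g t w ->
  is_deriveC (fun s => f s * g s) t (z * g t + f t * w).
Proof.
move=> [fre fim] [gre gim]; split.
  under [fun s => _]funext do rewrite reCM.
  apply: is_derive_eq (is_deriveB (is_deriveM fre gre) (is_deriveM fim gim)) _.
  by rewrite reCD !reCM /GRing.scale /=; ring.
under [fun s => _]funext do rewrite imCM.
apply: is_derive_eq (is_deriveD (is_deriveM fre gim) (is_deriveM fim gre)) _.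
by rewrite imCD !imCM /GRing.scale /=; ring.
Qed.

Lemma is_deriveC_sum (I : Type) (r : seq I) (F : I -> R -> C) t (dF : I -> C) :
  (forall i, is_deriveC (F i) t (dF i)) ->
  is_deriveC (fun s => \sum_(i <- r) F i s) t (\sum_(i <- r) dF i).
Proof.
move=> FdF; elim: r => [|i r IH].
  by under [fun s => _]funext do rewrite big_nil; rewrite big_nil; exact: is_deriveC_cst.
by under [fun s => _]funext do rewrite big_cons; rewrite big_cons; exact: is_deriveCD.
Qed.

Lemma is_deriveCJ f t z : is_deriveC f t z -> is_deriveC (fun s => (f s)^*) t z^*.
Proof.
move=> [fre fim]; split.
  by under [fun s => _]funext do rewrite reCJ; rewrite reCJ.
by under [fun s => _]funext do rewrite imCJ; rewrite imCJ; exact: is_deriveN.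
Qed.

Lemma is_deriveC_expNi r t :
  is_deriveC (fun s => expNi (s * r)) t (negi r * expNi (t * r)).
Proof.
have is_derive_mulr : is_derive t 1 (fun s => s * r) r.
  apply: is_derive_eq (is_deriveM (is_derive_id t 1) (is_derive_cst r t 1)) _.
  by rewrite /GRing.scale /=; ring.
split.
  apply: is_derive_eq (is_derive1_comp (is_derive_cos _) is_derive_mulr) _.
  by rewrite reCM /=; ring.
apply: is_derive_eq (is_deriveN (is_derive1_comp (is_derive_sin _) is_derive_mulr)) _.
by rewrite imCM /=; ring.
Qed.

End ComplexDerivative.

Section MatrixDerivative.
Variables (R : realType) (n : nat).
Local Notation C := R[i].
Implicit Types (F G : R -> 'M[C]_n) (t : R) (M N : 'M[C]_n).

Definition is_derivemx F t M := forall a b, is_deriveC (fun s => F s a b) t (M a b).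

Lemma dmx_val F t M : is_derivemx F t M -> dmx F t = M.
Proof.
move=> FM; apply/matrixP => a b; rewrite mxE; have [re_der im_der] := FM a b.
by rewrite !derive1E !derive_val; case: (M a b).
Qed.

Lemma is_derivemx_eq F t M N : is_derivemx F t M -> M = N -> is_derivemx F t N.
Proof. by move=> ? <-. Qed.

Lemma is_derivemx_cst M t : is_derivemx (fun=> M) t 0.
Proof. by move=> a b; rewrite mxE; exact: is_deriveC_cst. Qed.

Lemma is_derivemx_sum (I : Type) (r : seq I) (F : I -> R -> 'M[C]_n) t (dF : I -> 'M[C]_n) :
  (forall i, is_derivemx (F i) t (dF i)) ->
  is_derivemx (fun s => \sum_(i <- r) F i s) t (\sum_(i <- r) dF i).
Proof.
move=> FdF a b; under [fun s => _]funext do rewrite summxE; rewrite summxE.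
by apply: is_deriveC_sum => i; exact: FdF.
Qed.

Lemma is_derivemxD F G t M N : is_derivemx F t M -> is_derivemx G t N ->
  is_derivemx (fun s => F s + G s) t (M + N).
Proof.
move=> FM GN a b; under [fun s => _]funext do rewrite mxE; rewrite mxE.
exact: is_deriveCD.
Qed.

Lemma is_derivemxM F G t M N : is_derivemx F t M -> is_derivemx G t N ->
  is_derivemx (fun s => F s *m G s) t (M *m G t + F t *m N).
Proof.
move=> FM GN a b; under [fun s => _]funext do rewrite mxE.
apply: is_deriveC_eq; first by apply: is_deriveC_sum => c; exact: is_deriveCM.
by rewrite !mxE -big_split.
Qed.

Lemma is_derivemxZ c F t M : is_derivemx F t M -> is_derivemx (fun s => c *: F s) t (c *: M).
Proof.
move=> FM a b; under [fun s => _]funext do rewrite mxE.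
apply: is_deriveC_eq; first exact: is_deriveCM (is_deriveC_cst c t) (FM a b).
by rewrite mxE mul0r add0r.
Qed.

Lemma is_derivemx_adj F t M : is_derivemx F t M -> is_derivemx (fun s => (F s) ^t*) t (M ^t*).
Proof.
move=> FM a b; under [fun s => _]funext do rewrite !mxE; rewrite !mxE.
exact: is_deriveCJ.
Qed.

Lemma is_derivemx_diag_expNi (r : 'I_n -> R) t :
  is_derivemx (fun s => diag_mx (\row_j expNi (s * r j))) t
    (diag_mx (\row_j (negi (r j) * expNi (t * r j)))).
Proof.
move=> a b; under [fun s => _]funext do rewrite !mxE; rewrite !mxE.
have [->|ab] := eqVneq a b; last by rewrite !mulr0n; exact: is_deriveC_cst.
by rewrite !mulr1n; exact: is_deriveC_expNi.
Qed.

End MatrixDerivative.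

Lemma is_derivemx_expm_herm (R : realType) n (H : 'M[R[i]]_n) t : H \is hermsymmx ->
  is_derivemx (fun x => expm (negi x *: H)) t (expm (negi t *: H) *m (- 'i *: H)).
Proof.
move=> H_herm; under [fun x => _]funext do rewrite (expm_herm H_herm).
apply: is_derivemx_eq.
  apply: is_derivemxM (is_derivemx_cst _ _).
  exact: is_derivemxM (is_derivemx_cst _ _) (is_derivemx_diag_expNi _ _).
rewrite mulmx0 addr0 mul0mx add0r (expm_herm H_herm) (scale_herm_spectral H_herm).
rewrite (mul_conj_diag (spectral_unitarymx H)).
by congr (_ *m diag_mx _ *m _); apply/rowP => j; rewrite !mxE mulrC mulNr.
Qed.

Section Commutator.
Variables (R : realType) (n : nat).
Local Notation C := R[i].
Implicit Types M X Y : 'M[C]_n.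

Lemma hermitian_adj M : M \is hermsymmx -> M ^t* = M.
Proof. by move=> /is_hermitianmxP; rewrite expr0 scale1r => {2}->. Qed.

Definition icomm M X := 'i *: (M *m X - X *m M).

Lemma iter_icommD j M X Y :
  iter j (icomm M) (X + Y) = iter j (icomm M) X + iter j (icomm M) Y.
Proof.
elim: j => //= j ->.
by rewrite /icomm mulmxDr mulmxDl -scalerDr opprD addrACA.
Qed.

Lemma iter_icomm0 j M : iter j (icomm M) 0 = 0.
Proof. by elim: j => //= j ->; rewrite /icomm mulmx0 mul0mx subrr scaler0. Qed.

Lemma is_derivemx_iter_icomm j M F t F' : is_derivemx F t F' ->
  is_derivemx (fun s => iter j (icomm M) (F s)) t (iter j (icomm M) F').
Proof.
elim: j => //= j IH FF'; apply: is_derivemxZ.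
under [fun s => _]funext do rewrite -scaleN1r.
apply: is_derivemx_eq.
  apply: is_derivemxD; last apply: is_derivemxZ.
    exact: is_derivemxM (is_derivemx_cst _ _) (IH FF').
  exact: is_derivemxM (IH FF') (is_derivemx_cst _ _).
by rewrite mul0mx add0r mulmx0 addr0 scaleN1r.
Qed.

Lemma opnorm_iter_icomm_le j M X : M \is hermsymmx ->
  opnorm (iter j (icomm M) X) <= (2 * omega_max M) ^+ j * opnorm X.
Proof.
move=> M_herm; elim: j => [|j IH] /=; first by rewrite expr0 mul1r.
apply: le_trans (ler_opnormZ _ _) _.
rewrite /sqmod /= expr0n expr1n add0r sqrtr1 mul1r exprS -mulrA.
apply: le_trans (opnorm_commutator_le M_herm _) _.
by rewrite ler_wpM2l ?mulr_ge0 ?omega_max_ge0.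
Qed.

End Commutator.

Section Channel.
Variables (R : realType) (n K : nat).
Local Notation C := R[i].
Variables (H V : 'I_K -> 'M[C]_n) (S : 'I_K -> 'I_2) (A : 'M[C]_n).
Hypothesis H_herm : forall k, H k \is hermsymmx.
Hypothesis V_unitary : forall k, V k \is unitarymx.
Implicit Types (th : 'I_2 -> R) (m : 'I_K -> nat) (X : 'M[C]_n).

Definition gate th k : 'M[C]_n := V k *m expm (negi (th (S k)) *: H k).

Lemma gate_unitary th k : gate th k \is unitarymx.
Proof. by rewrite mul_unitarymx ?expm_herm_unitary. Qed.

Lemma is_derivemx_gate th s k t :
  is_derivemx (fun x => gate [eta th with s |-> x] k) t
    (if S k == s then gate [eta th with s |-> t] k *m (- 'i *: H k) else 0).
Proof.
rewrite /gate /=; have [_|_] := eqVneq (S k) s; last exact: is_derivemx_cst.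
apply: is_derivemx_eq.
  exact: is_derivemxM (is_derivemx_cst _ _) (is_derivemx_expm_herm _ (H_herm k)).
by rewrite mul0mx add0r mulmxA.
Qed.

Definition gate_conj th k X := (gate th k) ^t* *m X *m gate th k.

Lemma is_derivemx_gate_conj th s k t (X : R -> 'M[C]_n) X' : is_derivemx X t X' ->
  is_derivemx (fun x => gate_conj [eta th with s |-> x] k (X x)) t
    (gate_conj [eta th with s |-> t] k X' +
     (if S k == s then icomm (H k) (gate_conj [eta th with s |-> t] k (X t)) else 0)).
Proof.
move=> XX'; have UU' := is_derivemx_gate th s k t.
apply: is_derivemx_eq; first exact: is_derivemxM (is_derivemxM (is_derivemx_adj UU') XX') UU'.
rewrite /gate_conj; set U := gate _ k.
case: ifP => _; last by rewrite trmx0 map_mx0 mul0mx add0r mulmx0 !addr0.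
set Y := U ^t* *m X t *m U.
have adjH : (- 'i *: H k) ^t* = 'i *: H k.
  apply/matrixP => a b; rewrite -{2}(hermitian_adj (H_herm k)) !mxE rmorphM rmorphN /=.
  by rewrite conjCi opprK.
have dU_left : (U *m (- 'i *: H k)) ^t* *m X t *m U = 'i *: (H k *m Y).
  by rewrite trmx_mul map_mxM adjH -!scalemxAl !mulmxA.
have dU_right : U ^t* *m X t *m (U *m (- 'i *: H k)) = - ('i *: (Y *m H k)).
  by rewrite mulmxA -scalemxAr scaleNr.
by rewrite mulmxDl dU_left dU_right /icomm scalerBr addrAC addrC.
Qed.

Definition conj_ad m th k X := iter (m k) (icomm (H k)) (gate_conj th k X).

Definition conj_ads m (r : seq 'I_K) th X := foldl (fun Y k => conj_ad m th k Y) X r.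

Definition incr m j k := (m k + (k == j))%N.

Lemma conj_adsD m r th X Y : conj_ads m r th (X + Y) = conj_ads m r th X + conj_ads m r th Y.
Proof.
elim: r X Y => //= k r IH X Y.
by rewrite -IH /conj_ad /gate_conj mulmxDr mulmxDl iter_icommD.
Qed.

Lemma conj_ads0 m r th : conj_ads m r th 0 = 0.
Proof. by elim: r => //= k r IH; rewrite /conj_ad /gate_conj mulmx0 mul0mx iter_icomm0. Qed.

Lemma conj_ads_incr_notin m j r th : j \notin r -> conj_ads (incr m j) r th = conj_ads m r th.
Proof.
move=> jr; apply/funext => X; elim: r X jr => //= k r IH X.
rewrite in_cons negb_or eq_sym => /andP[/negPf kj jr].
by rewrite IH // /conj_ad /incr kj addn0.
Qed.

Lemma is_derivemx_conj_ad m th s k t (X : R -> 'M[C]_n) X' : is_derivemx X t X' ->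
  is_derivemx (fun x => conj_ad m [eta th with s |-> x] k (X x)) t
    (conj_ad m [eta th with s |-> t] k X' +
     (if S k == s then conj_ad (incr m k) [eta th with s |-> t] k (X t) else 0)).
Proof.
move=> XX'; apply: is_derivemx_eq.
  exact: is_derivemx_iter_icomm (is_derivemx_gate_conj _ _ _ XX').
rewrite iter_icommD /conj_ad /incr eqxx addn1 iterSr; case: ifP => // _.
by rewrite iter_icomm0.
Qed.

Lemma is_derivemx_conj_ads r m th s t (X : R -> 'M[C]_n) X' : uniq r -> is_derivemx X t X' ->
  is_derivemx (fun x => conj_ads m r [eta th with s |-> x] (X x)) t
    (conj_ads m r [eta th with s |-> t] X' +
     \sum_(j <- r | S j == s) conj_ads (incr m j) r [eta th with s |-> t] (X t)).
Proof.
elim: r m X X' => [|k r IH] m X X' /=; first by rewrite big_nil addr0.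
move=> /andP[kr r_uniq] XX'.
apply: is_derivemx_eq; first exact: IH r_uniq (is_derivemx_conj_ad m th s k XX').
rewrite big_cons /= conj_adsD; set th_t := [eta th with s |-> t].
have incr_r : \sum_(j <- r | S j == s) conj_ads (incr m j) r th_t (conj_ad m th_t k (X t)) =
    \sum_(j <- r | S j == s) conj_ads (incr m j) r th_t (conj_ad (incr m j) th_t k (X t)).
  rewrite big_seq_cond [RHS]big_seq_cond; apply: eq_bigr => j /andP[jr _].
  have /negPf kj : k != j by apply: contraNneq kr => ->.
  by rewrite /conj_ad /incr kj addn0.
case: ifP => _; last by rewrite conj_ads0 addr0 incr_r.
by rewrite (conj_ads_incr_notin _ _ kr) incr_r addrA.
Qed.

Definition chan_terms (L : seq ('I_K -> nat)) th :=
  \sum_(m <- L) conj_ads m (index_enum 'I_K) th A.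

Definition incr_all s (L : seq ('I_K -> nat)) :=
  [seq incr m j | m <- L, j <- [seq j <- index_enum 'I_K | S j == s]].

Lemma is_derivemx_chan_terms L th s t :
  is_derivemx (fun x => chan_terms L [eta th with s |-> x]) t
    (chan_terms (incr_all s L) [eta th with s |-> t]).
Proof.
apply: is_derivemx_eq.
  apply: is_derivemx_sum => m.
  exact: is_derivemx_conj_ads (index_enum_uniq _) (is_derivemx_cst A t).
rewrite /chan_terms /incr_all big_allpairs_dep /=; apply: eq_bigr => m _.
by rewrite conj_ads0 add0r big_filter.
Qed.

Definition params t1 t2 : 'I_2 -> R := fun j => if j == ord0 then t1 else t2.

Lemma pd1_chan_terms L :
  pd1 (fun t1 t2 => chan_terms L (params t1 t2)) =
  fun t1 t2 => chan_terms (incr_all ord0 L) (params t1 t2).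
Proof.
apply/funext => t1; apply/funext => t2; rewrite /pd1.
have upd x : params x t2 = [eta params t1 t2 with ord0 |-> x].
  by apply/funext => j; rewrite /params /=; case: ifP.
under [fun s => _]funext do rewrite upd.
by rewrite (dmx_val (is_derivemx_chan_terms _ _ _ _)) -upd.
Qed.

Lemma pd2_chan_terms L :
  pd2 (fun t1 t2 => chan_terms L (params t1 t2)) =
  fun t1 t2 => chan_terms (incr_all ord_max L) (params t1 t2).
Proof.
apply/funext => t1; apply/funext => t2; rewrite /pd2.
have upd x : params t1 x = [eta params t1 t2 with ord_max |-> x].
  by apply/funext => j; rewrite /params /=; case: j => -[|[|j]].
under [fun s => _]funext do rewrite upd.
by rewrite (dmx_val (is_derivemx_chan_terms _ _ _ _)) -upd.
Qed.

Lemma chan_chan_terms : chan H V S A = fun t1 t2 => chan_terms [:: fun=> 0%N] (params t1 t2).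
Proof.
apply/funext => t1; apply/funext => t2; rewrite /chan_terms big_seq1.
suff conj_ads_prod r th X : conj_ads (fun=> 0%N) r th X =
    (\prod_(k <- r) gate th k) ^t* *m X *m \prod_(k <- r) gate th k by rewrite conj_ads_prod.
elim: r X => [|k r IH] X /=; first by rewrite big_nil trmx1 map_mx1 mul1mx mulmx1.
by rewrite IH big_cons -mulmxE trmx_mul map_mxM !mulmxA.
Qed.

Lemma pderiv_chan p1 p2 : pderiv p1 p2 (chan H V S A) =
  fun t1 t2 => chan_terms (iter p1 (incr_all ord0) (iter p2 (incr_all ord_max) [:: fun=> 0%N]))
                          (params t1 t2).
Proof.
have iter_pd1 p L : iter p (@pd1 _ n) (fun t1 t2 => chan_terms L (params t1 t2)) =
    fun t1 t2 => chan_terms (iter p (incr_all ord0) L) (params t1 t2).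
  by elim: p => //= p ->; rewrite pd1_chan_terms.
have iter_pd2 p L : iter p (@pd2 _ n) (fun t1 t2 => chan_terms L (params t1 t2)) =
    fun t1 t2 => chan_terms (iter p (incr_all ord_max) L) (params t1 t2).
  by elim: p => //= p ->; rewrite pd2_chan_terms.
by rewrite /pderiv chan_chan_terms iter_pd2 iter_pd1.
Qed.

Definition weight m := \prod_(k < K) (2 * omega_max (H k)) ^+ m k.

Lemma opnorm_conj_ads_le m r th X :
  opnorm (conj_ads m r th X) <= (\prod_(k <- r) (2 * omega_max (H k)) ^+ m k) * opnorm X.
Proof.
have omega_ge0 k : 0 <= 2 * omega_max (H k) by rewrite mulr_ge0 ?omega_max_ge0.
elim: r X => [|k r IH] X /=; first by rewrite big_nil mul1r.
apply: le_trans (IH _) _; rewrite big_cons [_ ^+ _ * _]mulrC -mulrA.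
apply: ler_wpM2l; first by apply: prodr_ge0 => j _; exact: exprn_ge0.
apply: le_trans (opnorm_iter_icomm_le _ _ (H_herm k)) _.
apply: ler_wpM2l; first exact: exprn_ge0.
exact: opnorm_unitary_conj_le (gate_unitary _ _).
Qed.

Lemma opnorm_chan_terms_le L th : opnorm (chan_terms L th) <= (\sum_(m <- L) weight m) * opnorm A.
Proof.
apply: le_trans (ler_opnorm_sum _ _) _; rewrite mulr_suml.
by apply: ler_sum => m _; exact: opnorm_conj_ads_le.
Qed.

Lemma weight_incr m j : weight (incr m j) = weight m * (2 * omega_max (H j)).
Proof.
rewrite /weight /incr; under eq_bigr do rewrite exprD.
rewrite big_split; congr (_ * _).
rewrite (eq_bigr (fun k => if k == j then 2 * omega_max (H k) else 1)) => [|k _].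
  by rewrite -big_mkcond big_pred1_eq.
by case: eqP => _; [exact: expr1 | exact: expr0].
Qed.

Lemma sum_weight_incr_all s L : \sum_(m <- incr_all s L) weight m =
  (\sum_(l < K | S l == s) 2 * omega_max (H l)) * \sum_(m <- L) weight m.
Proof.
rewrite /incr_all big_allpairs_dep mulr_sumr; apply: eq_bigr => m _.
rewrite big_filter mulrC mulr_sumr; apply: eq_bigr => j _.
exact: weight_incr.
Qed.

Lemma sum_weight_iter_incr_all s p L : \sum_(m <- iter p (incr_all s) L) weight m =
  (\sum_(l < K | S l == s) 2 * omega_max (H l)) ^+ p * \sum_(m <- L) weight m.
Proof.
elim: p => [|p IH]; first by rewrite expr0 mul1r.
by rewrite iterS sum_weight_incr_all IH exprS mulrA.
Qed.

Lemma weight0 : weight (fun=> 0%N) = 1.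
Proof. by rewrite /weight big1 => // k _; exact: expr0. Qed.

End Channel.

Theorem lemma7 (R : realType) (n K : nat) (H V : 'I_K -> 'M[R[i]]_n)
  (S : 'I_K -> 'I_2) (A : 'M[R[i]]_n) :
  (forall k, H k \is hermsymmx) ->
  (forall k, V k \is unitarymx) ->
  forall (p1 p2 : nat) (phi1 phi2 : R),
    opnorm (pderiv p1 p2 (chan H V S A) phi1 phi2)
    <= (\sum_(l < K | S l == ord0) 2 * omega_max (H l)) ^+ p1
       * (\sum_(l < K | S l == ord_max) 2 * omega_max (H l)) ^+ p2
       * opnorm A.
Proof.
move=> H_herm V_unitary p1 p2 phi1 phi2.
rewrite (pderiv_chan V S A H_herm).
apply: le_trans (opnorm_chan_terms_le S A H_herm V_unitary _ _) _.
rewrite !sum_weight_iter_incr_all big_seq1 weight0 mulr1.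
exact: lexx.
Qed.
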